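(* Let $k$ be an algebraically closed field of characteristic $p\ge0$, let $1\le s\le t$ be integers, let $R=k[x,y]/(x^s,y^t)$ with its standard grading $R=\bigoplus_{i=0}^{s+t-2}R_i$, and let $\theta$ be the image of $x+y$ in $R$. Then there exist nonzero homogeneous elements $\omega_0,\omega_1,\dots,\omega_{s-1}$ of $R$ with $\omega_i\in R_i$ for each $i$, such that $$R=\bigoplus_{i=0}^{s-1}k[\theta]\,\omega_i$$ as $k[\theta]$-modules (an internal direct sum of the cyclic submodules $k[\theta]\omega_i$, which give an indecomposable decomposition of $R$ as a $k[\theta]$-module).
   Context: $R_i$ is the $k$-span of the images of the monomials $x^ay^b$ with $a+b=i$, $a<s$, $b<t$. $k[\theta]$ is the $k$-subalgebra of $R$ generated by $\theta$, and $R$ is regarded as a $k[\theta]$-module by multiplication. *)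

From HB Require Import structures.
From mathcomp Require Import all_boot all_order all_algebra.
Set Implicit Arguments. Unset Strict Implicit. Unset Printing Implicit Defensive.
Import GRing.Theory.
Local Open Scope ring_scope.

(* Bivariate polynomials k[x,y] are modelled as {poly {poly k}}:
   the outer variable is y ('X), the inner one is x ('X%:P).
   The coefficient of x^a y^b in p is (p`_b)`_a. *)

Definition varx (k : nzRingType) : {poly {poly k}} := ('X)%:P.
Definition vary (k : nzRingType) : {poly {poly k}} := 'X.

Definition in_ideal_xs_yt (k : comNzRingType) (s t : nat) (p : {poly {poly k}}) : Prop :=
  exists u v : {poly {poly k}}, p = u * varx k ^+ s + v * vary k ^+ t.

Definition homog_of_deg (k : nzRingType) (i : nat) (p : {poly {poly k}}) : Prop :=
  forall a b : nat, (a + b)%N <> i -> (p`_b)`_a = 0.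

Definition theta (k : nzRingType) : {poly {poly k}} := varx k + vary k.

Definition eval_theta (k : comNzRingType) (f : {poly k}) : {poly {poly k}} :=
  (map_poly (fun c : k => c%:P%:P) f).[theta k].

From HB Require Import structures.
From mathcomp Require Import all_boot all_order all_algebra.
From mathcomp Require Import zify ring.
From Stdlib Require Import Classical Wf_nat.
Set Implicit Arguments. Unset Strict Implicit. Unset Printing Implicit Defensive.
Import GRing.Theory.
Local Open Scope ring_scope.

(* Modulo θ the ring R becomes k[x]/(x^s) (substitute y = -x), and θ is
   nilpotent on R, so any lifts ω_n of x^n (n < s) generate R over k[θ].
   For directness, ω_n is chosen homogeneous of degree n and annihilated by the
   least power of θ among all such lifts.  If a homogeneous relation
   Σ_n c_n θ^(d-n) ω_n = 0 has top nonzero coefficient c_m, then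
   Σ_(n <= m) (c_n / c_m) θ^(m-n) ω_n is another such lift of x^m, annihilated by
   θ^(d-m); by minimality θ^(d-m) ω_m = 0 and the relation shortens. *)

Local Notation coef2 p a b := ((p`_b)`_a).

Section Homogeneous.
Variable k : nzRingType.
Implicit Types (p q : {poly {poly k}}) (c : k).
Local Notation homog := (@homog_of_deg k).
Local Notation x := (varx k).
Local Notation θ := (theta k).

Lemma homog0 i : homog i 0.
Proof. by move=> a b _; rewrite !coef0. Qed.

Lemma homogD i p q : homog i p -> homog i q -> homog i (p + q).
Proof. by move=> hp hq a b hab; rewrite !coefD hp ?hq ?addr0. Qed.

Lemma homog_sum i (J : finType) (F : J -> {poly {poly k}}) :
  (forall j, homog i (F j)) -> homog i (\sum_j F j).
Proof. by move=> hF; apply: big_ind => //; [exact: homog0 | exact: homogD]. Qed.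

Lemma homogCM i c p : homog i p -> homog i (c%:P%:P * p).
Proof. by move=> hp a b hab; rewrite !coefCM hp ?mulr0. Qed.

Lemma homog_varxX n : homog n (x ^+ n).
Proof.
move=> a b hab; rewrite /varx -rmorphXn coefC.
case: eqP => [eb|_]; last by rewrite coef0.
by rewrite coefXn; case: eqP => [ea|] //; case: hab; rewrite ea eb addn0.
Qed.

Lemma homog_thetaM i p : homog i p -> homog i.+1 (θ * p).
Proof.
move=> hp a b hab; rewrite /theta mulrDl !coefD /varx /vary coefCM !coefXM.
by case: a hab => [|a] hab; case: b hab => [|b] hab /=;
  rewrite ?coef0 ?add0r ?addr0 // !hp ?addr0 // => e; apply: hab; lia.
Qed.

Lemma homog_thetaXM i j p : homog i p -> homog (j + i) (θ ^+ j * p).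
Proof.
move=> hp; elim: j => [|j IH]; first by rewrite expr0 mul1r.
by rewrite exprS -mulrA addSn; apply: homog_thetaM.
Qed.

End Homogeneous.

Section EvalTheta.
Variable k : comNzRingType.
Implicit Types (f g : {poly k}) (c : k).
Local Notation homog := (@homog_of_deg k).
Local Notation θ := (theta k).

Lemma eval_thetaE f : eval_theta f = (map_poly (polyC \o polyC) f).[θ].
Proof. by []. Qed.

Lemma eval_thetaC c : eval_theta c%:P = c%:P%:P.
Proof. by rewrite eval_thetaE map_polyC hornerC. Qed.

Lemma eval_thetaD f g : eval_theta (f + g) = eval_theta f + eval_theta g.
Proof. by rewrite !eval_thetaE rmorphD hornerD. Qed.

Lemma eval_thetaM f g : eval_theta (f * g) = eval_theta f * eval_theta g.
Proof. by rewrite !eval_thetaE rmorphM hornerM. Qed.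

Lemma eval_thetaXn n : eval_theta 'X^n = θ ^+ n.
Proof. by rewrite eval_thetaE map_polyXn hornerXn. Qed.

Lemma eval_theta_wide N f :
  (size f <= N)%N -> eval_theta f = \sum_(j < N) (f`_j)%:P%:P * θ ^+ j.
Proof.
move=> le_fN; rewrite eval_thetaE (@horner_coef_wide _ N); last first.
  exact: leq_trans (size_poly _ _) le_fN.
by apply: eq_bigr => j _; rewrite coef_map_id0.
Qed.

(* Truncated subtraction: when [a + b < n] both sides vanish. *)
Lemma coef2_eval_thetaM n f w a b : homog n w ->
  coef2 (eval_theta f * w) a b = f`_(a + b - n) * coef2 (θ ^+ (a + b - n) * w) a b.
Proof.
move=> hw; set d := (a + b - n)%N.
have lt_dN : (d < maxn (size f) d.+1)%N by rewrite leq_maxr.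
rewrite (eval_theta_wide (leq_maxl (size f) d.+1)) mulr_suml !coef_sum.
rewrite (bigD1 (Ordinal lt_dN)) //= -mulrA !coefCM big1 ?addr0 // => j ne_jd.
rewrite -mulrA !coefCM (homog_thetaXM (j := j) hw) ?mulr0 //.
by move: ne_jd; rewrite /d -val_eqE /=; lia.
Qed.

End EvalTheta.

Section Ideal.
Variables (k : comNzRingType) (s t : nat).
Implicit Types (p q r : {poly {poly k}}).
Local Notation I := (@in_ideal_xs_yt k s t).
Local Notation x := (varx k).
Local Notation y := (vary k).
Local Notation θ := (theta k).

Lemma in_ideal0 : I 0.
Proof. by exists 0, 0; rewrite !mul0r addr0. Qed.

Lemma in_idealD p q : I p -> I q -> I (p + q).
Proof.
move=> [u [v ->]] [u' [v' ->]]; exists (u + u'), (v + v').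
by rewrite !mulrDl addrACA.
Qed.

Lemma in_idealMl r p : I p -> I (r * p).
Proof. by move=> [u [v ->]]; exists (r * u), (r * v); rewrite mulrDr !mulrA. Qed.

Lemma in_idealMr r p : I p -> I (p * r).
Proof. by rewrite mulrC; apply: in_idealMl. Qed.

Lemma in_idealB p q : I p -> I q -> I (p - q).
Proof. by move=> Ip Iq; rewrite -mulN1r; apply/in_idealD/in_idealMl. Qed.

Lemma in_ideal_sum (J : finType) (F : J -> {poly {poly k}}) :
  (forall j, I (F j)) -> I (\sum_j F j).
Proof. by move=> IF; apply: big_ind => //; [exact: in_ideal0 | exact: in_idealD]. Qed.

Lemma in_ideal_varxX a : (s <= a)%N -> I (x ^+ a).
Proof.
by move=> le_sa; exists (x ^+ (a - s)), 0; rewrite mul0r addr0 -exprD subnK.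
Qed.

Lemma in_ideal_varyX b : (t <= b)%N -> I (y ^+ b).
Proof.
by move=> le_tb; exists 0, (y ^+ (b - t)); rewrite mul0r add0r -exprD subnK.
Qed.

Lemma in_ideal_thetaX : I (θ ^+ (s + t)).
Proof.
rewrite /theta exprDn; apply: in_ideal_sum => i; rewrite -mulr_natr.
have [le_s|lt_s] := leqP s (s + t - i).
  by rewrite -mulrA; apply/in_idealMr/in_ideal_varxX.
have le_ti : (t <= i)%N by move: lt_s (ltn_ord i); lia.
by rewrite mulrAC; apply/in_idealMl/in_ideal_varyX.
Qed.

Lemma polyC_poly_expand n (E : nat -> k) :
  (\poly_(a < n) E a)%:P = \sum_(a < n) (E a)%:P%:P * x ^+ a.
Proof.
rewrite poly_def rmorph_sum; apply: eq_bigr => a _.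
by rewrite -mul_polyC rmorphM /= rmorphXn.
Qed.

Lemma in_idealP p :
  I p <-> forall a b, (a < s)%N -> (b < t)%N -> coef2 p a b = 0.
Proof.
split.
  move=> [u [v ->]] a b lt_as lt_bt.
  by rewrite coefD /varx /vary -rmorphXn coefMC !coefMXn lt_bt addr0 coefMXn lt_as.
move=> p0; rewrite -[p]coefK poly_def; apply: in_ideal_sum => b.
rewrite -mul_polyC -[p`_b]coefK polyC_poly_expand mulr_suml.
apply: in_ideal_sum => a.
have [le_sa|lt_as] := leqP s a; first by apply/in_idealMr/in_idealMl/in_ideal_varxX.
have [le_tb|lt_bt] := leqP t b; first by apply/in_idealMl/in_ideal_varyX.
by rewrite p0 // !mul0r; exact: in_ideal0.
Qed.

End Ideal.

Section ModTheta.
Variable k : comNzRingType.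
Implicit Types (p q : {poly {poly k}}).
Local Notation x := (varx k).
Local Notation θ := (theta k).

Definition theta_dvd p := exists q, p = θ * q.

Lemma theta_dvdMl q p : theta_dvd p -> theta_dvd (q * p).
Proof. by move=> [u ->]; exists (q * u); rewrite mulrCA. Qed.

Lemma theta_dvd_sum (J : finType) (F : J -> {poly {poly k}}) :
  (forall j, theta_dvd (F j)) -> theta_dvd (\sum_j F j).
Proof.
move=> dF; apply: big_ind => //; first by exists 0; rewrite mulr0.
by move=> _ _ [u ->] [v ->]; exists (u + v); rewrite mulrDr.
Qed.

(* Reduction modulo [θ] substitutes [- x] for [y]. *)
Definition mod_theta p : {poly k} := p.[- 'X].

Lemma theta_dvd_sub_mod_theta p : theta_dvd (p - (mod_theta p)%:P).
Proof.
rewrite /mod_theta horner_coef -{1}[p]coefK poly_def rmorph_sum -sumrB.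
apply: theta_dvd_sum => b; rewrite -mul_polyC rmorphM rmorphXn /= -mulrBr.
apply: theta_dvdMl; rewrite rmorphN subrXX.
by exists (\sum_(i < b) 'X ^+ (b.-1 - i) * (- x) ^+ i); rewrite opprK addrC.
Qed.

Lemma lift_notin_ideal s t n u : (n < s)%N -> (s <= t)%N ->
  ~ in_ideal_xs_yt s t (x ^+ n + θ * u).
Proof.
move=> lt_ns le_st [a [b]] /(congr1 (fun p => (mod_theta p)`_n)).
rewrite /mod_theta !hornerD !hornerM !hornerXn /theta /varx /vary hornerD.
rewrite hornerC hornerX -!rmorphXn !hornerC addrN mul0r addr0 coefXn eqxx.
rewrite coefD coefMXn lt_ns add0r exprNn mulrA coefMXn (leq_trans lt_ns le_st).
by move/eqP; rewrite oner_eq0.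
Qed.

End ModTheta.

Section Lifts.
Variables (k : comNzRingType) (s t : nat).
Implicit Types (w : {poly {poly k}}).
Local Notation I := (@in_ideal_xs_yt k s t).
Local Notation x := (varx k).
Local Notation θ := (theta k).

Definition homog_lift n w := homog_of_deg n w /\ exists u, w = x ^+ n + θ * u.

Definition minimal_lift n w :=
  homog_lift n w /\
  forall w' j, homog_lift n w' -> I (θ ^+ j * w') -> I (θ ^+ j * w).

Lemma homog_lift_varxX n : homog_lift n (x ^+ n).
Proof. by split; [exact: homog_varxX | exists 0; rewrite mulr0 addr0]. Qed.

Lemma exists_minimal_lift n : exists w, minimal_lift n w.
Proof.
pose Q e := exists w, homog_lift n w /\ I (θ ^+ e * w).
have Q_st : Q (s + t)%N.
  by exists (x ^+ n); split; [exact: homog_lift_varxX | apply/in_idealMr/in_ideal_thetaX].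
have [e [[[w [w_lift Iw]] e_min] _]] :=
  dec_inh_nat_subset_has_unique_least_element Q (fun e => classic (Q e)) (ex_intro _ _ Q_st).
exists w; split=> // w' j w'_lift Iw'.
have /leP le_ej : (e <= j)%coq_nat by apply: e_min; exists w'.
by rewrite -(subnK le_ej) exprD -mulrA; apply: in_idealMl.
Qed.

End Lifts.

Section Span.
Variables (k : comNzRingType) (s t : nat) (W : nat -> {poly {poly k}}).
Hypothesis W_lift : forall n, (n < s)%N -> exists u, W n = varx k ^+ n + theta k * u.
Implicit Types (p : {poly {poly k}}) (f g : nat -> {poly k}).
Local Notation I := (@in_ideal_xs_yt k s t).
Local Notation θ := (theta k).

Definition lincomb f := \sum_(i < s) eval_theta (f i) * W i.

Lemma lincombDthetaX N f g :
  lincomb f + θ ^+ N * lincomb g = lincomb (fun i => f i + 'X^N * g i).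
Proof.
rewrite /lincomb mulr_sumr -big_split; apply: eq_bigr => i _ /=.
by rewrite eval_thetaD eval_thetaM eval_thetaXn mulrDl mulrA.
Qed.

Lemma span_mod_theta p : exists f q, I (p - lincomb f - θ * q).
Proof.
pose g := mod_theta p; pose f a := (g`_a)%:P.
have [q1 def_q1] := theta_dvd_sub_mod_theta p.
have [q2 def_q2] : theta_dvd ((\poly_(a < s) g`_a)%:P - lincomb f).
  rewrite polyC_poly_expand /lincomb -sumrB; apply: theta_dvd_sum => a.
  have [u ->] := W_lift (ltn_ord a).
  rewrite eval_thetaC -mulrBr; apply: theta_dvdMl.
  by exists (- u); rewrite opprD addNKr mulrN.
have I_high : I (g%:P - (\poly_(a < s) g`_a)%:P).
  apply/in_idealP => a b lt_as _; rewrite -rmorphB coefC.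
  by case: eqP => _; rewrite ?coefB ?coef_poly ?lt_as ?subrr ?coef0.
exists f, (q1 + q2).
suff -> : p - lincomb f - θ * (q1 + q2) = g%:P - (\poly_(a < s) g`_a)%:P by [].
by rewrite mulrDr -def_q1 -def_q2; ring.
Qed.

Lemma span_mod_thetaX N p : exists f q, I (p - lincomb f - θ ^+ N * q).
Proof.
elim: N p => [|N IH] p.
  by exists (fun=> 0), p; rewrite expr0 mul1r /lincomb big1 ?subr0 ?subrr;
    [exact: in_ideal0 | move=> i _; rewrite eval_thetaC mul0r].
have [f [q Iq]] := IH p; have [g [q' Iq']] := span_mod_theta q.
exists (fun i => f i + 'X^N * g i), q'; rewrite -lincombDthetaX.
have -> : p - (lincomb f + θ ^+ N * lincomb g) - θ ^+ N.+1 * q' =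
    (p - lincomb f - θ ^+ N * q) + θ ^+ N * (q - lincomb g - θ * q').
  by rewrite exprSr; ring.
exact/in_idealD/in_idealMl.
Qed.

Lemma lincomb_span p : exists f, I (p - lincomb f).
Proof.
have [f [q Iq]] := span_mod_thetaX (s + t) p; exists f.
rewrite -[p - _](subrK (θ ^+ (s + t) * q)).
exact/in_idealD/in_idealMr/in_ideal_thetaX.
Qed.

End Span.

Section Direct.
Variables (k : fieldType) (s t : nat) (W : nat -> {poly {poly k}}).
Hypothesis W_min : forall n, (n < s)%N -> minimal_lift s t n (W n).
Implicit Types (c : nat -> k) (f : nat -> {poly k}).
Local Notation I := (@in_ideal_xs_yt k s t).
Local Notation θ := (theta k).

Definition rel_term c d n := (c n)%:P%:P * (θ ^+ (d - n) * W n).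

Lemma W_homog n : (n < s)%N -> homog_of_deg n (W n).
Proof. by move=> /W_min [[]]. Qed.

(* Dividing the relation by its top coefficient [c m] yields a lift of
   [x ^+ m] killed by [θ ^+ (d - m)]. *)
Lemma relation_top d c m : (m < s)%N -> (m <= d)%N -> c m != 0 ->
  I (\sum_(n < m.+1) rel_term c d n) -> I (rel_term c d m).
Proof.
move=> lt_ms le_md cm_neq0 I_rel.
pose w := \sum_(n < m.+1) (c n / c m)%:P%:P * (θ ^+ (m - n) * W n).
have w_lift : homog_lift m w.
  split.
    apply: homog_sum => n; apply: homogCM; have le_nm : (n <= m)%N := ltn_ord n.
    have := homog_thetaXM (j := (m - n)%N) (W_homog (leq_ltn_trans le_nm lt_ms)).
    by rewrite subnK.
  have [[_ [u def_Wm]] _] := W_min lt_ms.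
  exists (u + \sum_(n < m) (c n / c m)%:P%:P * (θ ^+ (m - n.+1) * W n)).
  rewrite /w big_ord_recr /= subnn expr0 mul1r divff // !polyC1 mul1r def_Wm.
  rewrite mulrDr mulr_sumr addrC -addrA; congr (_ + (_ + _)); apply: eq_bigr => n _.
  by rewrite -(subnSK (ltn_ord n)) exprS; ring.
have scale : θ ^+ (d - m) * w = (c m)^-1%:P%:P * \sum_(n < m.+1) rel_term c d n.
  rewrite /w /rel_term !mulr_sumr; apply: eq_bigr => n _.
  have le_nm : (n <= m)%N := ltn_ord n.
  have -> : (d - n = (d - m) + (m - n))%N by lia.
  by rewrite exprD !polyCM; ring.
have := (W_min lt_ms).2 w (d - m)%N w_lift.
by rewrite scale => /(_ (in_idealMl _ I_rel)); apply: in_idealMl.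
Qed.

Lemma relation_terms d c m : (m <= s)%N -> (forall n, (d < n)%N -> c n = 0) ->
  I (\sum_(n < m) rel_term c d n) -> forall n, (n < m)%N -> I (rel_term c d n).
Proof.
move=> + c_gt; elim: m => [//|m IH] lt_ms I_rel.
have I_top : I (rel_term c d m).
  have [cm0|cm_neq0] := eqVneq (c m) 0.
    by rewrite /rel_term cm0 !rmorph0 mul0r; exact: in_ideal0.
  apply: relation_top => //; case: leqP => // /c_gt cm0.
  by rewrite cm0 eqxx in cm_neq0.
move=> n; rewrite ltnS leq_eqVlt => /predU1P [-> //|lt_nm].
apply: IH (ltnW lt_ms) _ n lt_nm.
by move: (in_idealB I_rel I_top); rewrite big_ord_recr /= addrK.
Qed.

Lemma lincomb_direct f : I (lincomb s W f) ->
  forall i, (i < s)%N -> I (eval_theta (f i) * W i).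
Proof.
move=> I_comb i lt_is; apply/in_idealP => a b lt_as lt_bt.
(* [c] lists the coefficients of the degree-[d] part of the relation. *)
pose d := (a + b)%N; pose c n := if (n <= d)%N then (f n)`_(d - n) else 0.
have c_gt n : (d < n)%N -> c n = 0 by move=> lt_dn; rewrite /c leqNgt lt_dn.
have term_coef n a' b' : (n < s)%N ->
    coef2 (rel_term c d n) a' b' = (a' + b' == d)%:R * coef2 (eval_theta (f n) * W n) a' b'.
  move=> lt_ns; have Wn := W_homog lt_ns.
  rewrite /rel_term !coefCM (coef2_eval_thetaM _ _ _ Wn) /c.
  case: eqP => [<-|ne_d]; case: leqP => le_nd; rewrite ?mul1r ?mul0r //.
  - by rewrite (eqP (ltnW le_nd)) expr0 mul1r Wn ?mulr0 //; lia.
  - by rewrite (homog_thetaXM (j := (d - n)%N) Wn) ?mulr0 // subnK.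
have I_slice : I (\sum_(n < s) rel_term c d n).
  apply/in_idealP => a' b' lt_a's lt_b't.
  have := (in_idealP _ _ _).1 I_comb a' b' lt_a's lt_b't.
  rewrite /lincomb !coef_sum => comb0.
  under eq_bigr => n _ do rewrite term_coef //.
  by rewrite -mulr_sumr comb0 mulr0.
have := (in_idealP _ _ _).1 (relation_terms (leqnn s) c_gt I_slice lt_is) a b lt_as lt_bt.
by rewrite term_coef // eqxx mul1r.
Qed.

End Direct.

Theorem theorem2p12 (k : closedFieldType) (s t : nat) :
  (1 <= s)%N -> (s <= t)%N ->
  exists omega : 'I_s -> {poly {poly k}},
    (forall i : 'I_s, homog_of_deg i (omega i) /\ ~ in_ideal_xs_yt s t (omega i)) /\
    (* the submodules k[theta] omega_i span R *)
    (forall r : {poly {poly k}}, exists f : 'I_s -> {poly k},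
        in_ideal_xs_yt s t (r - \sum_(i < s) eval_theta (f i) * omega i)) /\
    (* the sum is direct *)
    (forall f : 'I_s -> {poly k},
        in_ideal_xs_yt s t (\sum_(i < s) eval_theta (f i) * omega i) ->
        forall i : 'I_s, in_ideal_xs_yt s t (eval_theta (f i) * omega i)).
Proof.
case: s => [//|s] _ le_st.
have [W' W'_min] := fin_all_exists (fun i : 'I_s.+1 => exists_minimal_lift k s.+1 t i).
pose W n := W' (inord n).
have W_min n : (n < s.+1)%N -> minimal_lift s.+1 t n (W n).
  by move=> lt_ns; have := W'_min (inord n); rewrite inordK.
have W_lift n (lt_ns : (n < s.+1)%N) := (W_min n lt_ns).1.2.
exists (fun i => W i); split; [|split].
- move=> i; have [[homog_Wi [u def_Wi]] _] := W_min i (ltn_ord i).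
  by split=> //; rewrite def_Wi; apply: lift_notin_ideal.
- by move=> r; have [f] := lincomb_span t W_lift r; exists (fun i => f i).
- move=> f I_comb i.
  have := lincomb_direct W_min (f := fun n => f (inord n)) _ (ltn_ord i).
  rewrite inord_val; apply; rewrite /lincomb.
  by under eq_bigr => j _ do rewrite inord_val.
Qed.
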